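(* Let $H$ be a real Hilbert space, $A:H\to c_0$ bounded linear with adjoint $A^*:\ell^1\to H$ (identifying $c_0^*=\ell^1$), with $A$ and $A^*$ injective. Let $(H_n)_{n\in\mathbb N}$ be subspaces of $H$ with $\dim H_n=n$ whose orthogonal projections $P_n$ satisfy $P_nv\to v$ for all $v\in H$. Let $f\in H$, $u^\dagger\in\ell^1$ with $A^*u^\dagger=f$, and suppose there is $v^\dagger\in H$ with $\|Av^\dagger\|_\infty\le1$, $(Av^\dagger)_i=\operatorname{sign}(u^\dagger_i)$ whenever $u^\dagger_i\ne0$, and $|(Av^\dagger)_i|=1$ if and only if $i\in\operatorname{supp}u^\dagger$. Then there is $n_0\in\mathbb N$ such that for all $n\ge n_0$: (i) $u^\dagger$ is the unique solution of $\min\{\|u\|_1: u\in\ell^1,\ P_nA^*u=P_nf\}$; (ii) there is $v^{\dagger,n}\in H_n$ with $\|Av^{\dagger,n}\|_\infty\le1$, $|(Av^{\dagger,n})_i|=1$ if and only if $i\in\operatorname{supp}u^\dagger$, and $\varepsilon_{v^{\dagger,n}}\ge\frac12\varepsilon_{v^\dagger}$.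
   Context: $A^*$ is defined by $\langle A^*u,z\rangle=\sum_iu_i(Az)_i$. $\operatorname{supp}u=\{i:u_i\ne0\}$. For $v\in H$, $\varepsilon_v=1-\max_{i\notin\operatorname{supp}u^\dagger}|(Av)_i|$. *)

From HB Require Import structures.
From mathcomp Require Import all_boot all_order all_algebra.
From mathcomp Require Import all_classical all_reals all_analysis.
Set Implicit Arguments. Unset Strict Implicit. Unset Printing Implicit Defensive.
Import Order.TTheory GRing.Theory Num.Theory.
Import numFieldNormedType.Exports.
Local Open Scope classical_set_scope.
Local Open Scope ring_scope.

Section Defs.
Context {R : realType} {V : completeNormedModType R}.

(* ip is an inner product on V inducing the norm of V: together with the
   completeness of V this makes V a real Hilbert space. *)
Definition inner_product (ip : V -> V -> R) : Prop :=
  [/\ forall x y, ip x y = ip y x,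
      forall a x y z, ip (a *: x + y) z = a * ip x z + ip y z &
      forall x, ip x x = `|x| ^+ 2].

Definition bounded_linear_to_c0 (A : V -> nat -> R) : Prop :=
  [/\ forall a x y i, A (a *: x + y) i = a * A x i + A y i,
      (exists C : R, forall x i, `|A x i| <= C * `|x|) &
      forall x, A x @ \oo --> (0 : R)].

Definition l1 (u : nat -> R) : Prop := cvgn (series (fun i => `|u i|)).
Definition l1norm (u : nat -> R) : R := limn (series (fun i => `|u i|)).

Definition is_adjoint (ip : V -> V -> R) (A : V -> nat -> R)
  (Astar : (nat -> R) -> V) : Prop :=
  forall u, l1 u -> forall z, ip (Astar u) z = limn (series (fun i => u i * A z i)).

Definition subspace_dim (S : set V) (n : nat) : Prop :=
  exists b : 'I_n -> V,
    (forall c : 'I_n -> R, \sum_(i < n) c i *: b i = 0 -> forall i, c i = 0) /\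
    S = [set \sum_(i < n) c i *: b i | c in [set: 'I_n -> R]].

Definition orth_proj (ip : V -> V -> R) (S : set V) (p : V -> V) : Prop :=
  forall v, S (p v) /\ forall w, S w -> ip (v - p v) w = 0.

Definition supp (u : nat -> R) : set nat := [set i | u i != 0].

Definition sup_le1 (A : V -> nat -> R) (v : V) : Prop := forall i, `|A v i| <= 1.

(* eps_v = 1 - max_{i notin supp u} |(A v)_i|  (max = sup since A v in c_0) *)
Definition eps (A : V -> nat -> R) (u : nat -> R) (v : V) : R :=
  1 - sup [set `|A v i| | i in ~` supp u].

End Defs.

From HB Require Import structures.
From mathcomp Require Import all_boot all_order all_algebra.
From mathcomp Require Import all_classical all_reals all_analysis.
From mathcomp Require Import lra.
Set Implicit Arguments. Unset Strict Implicit. Unset Printing Implicit Defensive.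
Import Order.TTheory GRing.Theory Num.Theory.
Import numFieldNormedType.Exports.
Local Open Scope classical_set_scope.
Local Open Scope ring_scope.

(* The support of u† is finite, because (A v†)_i -> 0 while |(A v†)_i| = 1
   exactly on the support; write L for it.  Injectivity of A* on finitely
   supported sequences makes the coordinate functionals z |-> (A z)_i
   linearly independent, so for large n the space H_n contains vectors w_j
   (j in L) with (A w_j)_i = delta_ij on L, converging as n -> oo.  Then
   v^n := P_n v† + sum_j (A (v† - P_n v†))_j w_j lies in H_n, agrees with v†
   on L, and A v^n -> A v† uniformly, so v^n keeps the peak structure of v†
   with half the gap eps_{v†}.  It is a dual certificate for the projected
   problem: if P_n A* u = P_n f then sum_i u_i (A v^n)_i = <A* u, v^n>
   = <f, v^n> = ||u†||_1 <= ||u||_1, and equality forces u to vanish off L,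
   where testing against the w_j identifies u with u†. *)

Lemma sum_ord_delta (R : pzRingType) (N j : nat) (F : nat -> R) : (j < N)%N ->
  \sum_(i < N) (i == j :> nat)%:R * F i = F j.
Proof.
move=> jN; rewrite (eq_bigr (fun i : 'I_N => if i == j :> nat then F i else 0)).
  by rewrite -big_mkcond big_ord1_eq jN.
by move=> i _; case: eqP; rewrite ?mul1r ?mul0r.
Qed.

Lemma sum_seq_delta (R : pzRingType) (L : seq nat) (F : nat -> R) i :
  uniq L -> i \in L -> \sum_(j <- L) (i == j)%:R * F j = F i.
Proof.
move=> uL iL; rewrite (big_rem _ iL) /= eqxx mul1r big1_seq ?addr0 // => j /andP[_ jL].
by case: eqP jL => [<-|_]; rewrite ?mem_rem_uniqF ?mul0r.
Qed.

Lemma seq_nat_bounded (L : seq nat) : exists N, forall i, i \in L -> (i < N)%N.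
Proof. by exists (\max_(j <- L) j).+1 => i iL; rewrite ltnS leq_bigmax_seq. Qed.

Lemma cvg_sum_seq (R : numFieldType) (U : normedModType R) (I : eqType)
    (r : seq I) (F : I -> nat -> U) (a : I -> U) :
  (forall j, j \in r -> F j @ \oo --> a j) ->
  (fun n => \sum_(j <- r) F j n) @ \oo --> \sum_(j <- r) a j.
Proof.
move=> Fa; rewrite big_seq.
have -> : (fun n => \sum_(j <- r) F j n) = fun n => \sum_(j <- r | j \in r) F j n.
  by apply: funext => n; rewrite big_seq.
exact: (@cvg_big _ _ +%R 0 (mem r) add_continuous _ _ r F a _ Fa).
Qed.

Section Series.
Variable R : realType.
Implicit Types (u s g : nat -> R).

Lemma series_finsupp g N : (forall i, (N <= i)%N -> g i = 0) ->
  cvgn (series g) /\ limn (series g) = \sum_(i < N) g i.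
Proof.
move=> gN; suff cvg_g : series g @ \oo --> \sum_(i < N) g i.
  by split; [apply/cvg_ex; exists (\sum_(i < N) g i) | apply: cvg_lim].
apply: cvg_near_cst; near=> n.
have Nn : (N <= n)%N by near: n; exists N.
rewrite /series /= (@big_cat_nat _ _ _ N 0 n _ _ (leq0n N) Nn) /= big_mkord.
rewrite [X in _ + X]big1_seq ?addr0 // => i /andP[_].
by rewrite mem_index_iota => /andP[/gN].
Unshelve. all: by end_near.
Qed.

Lemma l1_finsupp u N : (forall i, (N <= i)%N -> u i = 0) -> l1 u.
Proof.
move=> uN; apply: (proj1 (@series_finsupp (fun i => `|u i|) N _)) => i /uN ->.
by rewrite normr0.
Qed.

Lemma term_le_lim_series g k : (forall i, 0 <= g i) -> cvgn (series g) ->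
  g k <= limn (series g).
Proof.
move=> g0 cvg_g.
have nd : {homo series g : n m / (n <= m)%N >-> n <= m}.
  move=> n m nm; rewrite /series /= (@big_cat_nat _ _ _ n 0 m _ _ (leq0n n) nm) /= lerDl.
  by apply: sumr_ge0.
apply: le_trans (nondecreasing_cvgn_le nd cvg_g k.+1).
by rewrite /series /= big_nat_recr //= lerDr; apply: sumr_ge0.
Qed.

Lemma series_mul_le_l1norm u s : l1 u -> (forall i, `|s i| <= 1) ->
  cvgn (series (fun i => u i * s i)) /\
  limn (series (fun i => u i * s i)) <= l1norm u.
Proof.
move=> l1u s1; have us i : `|u i * s i| <= `|u i| by rewrite normrM ler_piMr.
have cvg_us : cvgn (series (fun i => u i * s i)).
  by apply: normed_cvg; apply: (series_le_cvg _ _ us).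
split=> //; apply: lim_series_le => // i; exact: le_trans (ler_norm _) (us i).
Qed.

Lemma series_mul_sg u s : (forall i, u i != 0 -> s i = Num.sg (u i)) ->
  limn (series (fun i => u i * s i)) = l1norm u.
Proof.
move=> us; congr (limn (series _)); apply: funext => i.
have [->|ui] := eqVneq (u i) 0; first by rewrite mul0r normr0.
by rewrite us // normrEsg mulrC.
Qed.

Lemma eq0_off_peak u s : l1 u -> (forall i, `|s i| <= 1) ->
  l1norm u <= limn (series (fun i => u i * s i)) ->
  forall i, `|s i| < 1 -> u i = 0.
Proof.
move=> l1u s1 le_us k sk1.
have [cvg_us _] := series_mul_le_l1norm l1u s1.
pose g i := `|u i| - u i * s i.
have g0 i : 0 <= g i.
  by rewrite subr_ge0 (le_trans (ler_norm _)) // normrM ler_piMr.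
have cvg_g : cvgn (series g) := is_cvg_seriesB l1u cvg_us.
have lim_g : limn (series g) <= 0.
  by rewrite (lim_seriesB l1u cvg_us) subr_le0.
have gk : g k <= 0 := le_trans (term_le_lim_series k g0 cvg_g) lim_g.
have : `|u k| * (1 - `|s k|) <= 0.
  apply: le_trans gk; rewrite /g mulrBr mulr1 lerB //.
  by rewrite -normrM ler_norm.
by rewrite pmulr_lle0 ?subr_gt0 // normr_le0 => /eqP.
Qed.

Lemma cvg0_tail_lt s e : s @ \oo --> 0 -> 0 < e ->
  exists N, forall i, (N <= i)%N -> `|s i| < e.
Proof.
move=> /cvgrPdist_lt /[apply] -[N _ sN]; exists N => i /sN.
by rewrite sub0r normrN.
Qed.

Lemma peak_set_finite s u : s @ \oo --> 0 -> (forall i, `|s i| = 1 <-> u i != 0) ->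
  exists L : seq nat, uniq L /\ forall i, (i \in L) = (u i != 0).
Proof.
move=> s0 peak; have [N sN] := cvg0_tail_lt s0 ltr01.
exists [seq i <- iota 0 N | u i != 0]; split=> [|i]; first by rewrite filter_uniq ?iota_uniq.
rewrite mem_filter mem_iota add0n /=; case: (u i =P 0) => //= /eqP ui.
by rewrite ltnNge; apply/negP => /sN; rewrite (proj2 (peak i) ui) ltxx.
Qed.

Lemma peak_perturbation (u s t : nat -> R) e : 0 < e ->
  (forall i, `|t i| = 1 <-> u i != 0) ->
  (forall i, u i = 0 -> `|t i| <= 1 - e) ->
  (forall i, u i != 0 -> s i = t i) ->
  (forall i, `|s i - t i| < e / 2) ->
  [/\ forall i, u i = 0 -> `|s i| <= 1 - e / 2,
      forall i, `|s i| = 1 <-> u i != 0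
    & forall i, `|s i| <= 1].
Proof.
move=> e0 peak_t off_t st st_close.
have off_s i : u i = 0 -> `|s i| <= 1 - e / 2.
  move=> ui; have := ler_distD (t i) (s i) 0; rewrite !subr0.
  by have := off_t i ui; have := st_close i; lra.
have on_s i : u i != 0 -> `|s i| = 1 by move=> ui; rewrite st //; apply/peak_t.
split=> // i; last by have [/off_s|/on_s ->] := eqVneq (u i) 0; lra.
split=> [si1|/on_s //]; apply/eqP => ui.
by have := off_s i ui; rewrite si1; lra.
Qed.

End Series.

Section Eps.
Variables (R : realType) (V : completeNormedModType R) (A : V -> nat -> R).
Implicit Types (u : nat -> R) (v : V).

Lemma le_eps u v c : (exists i, u i = 0) ->
  (forall i, u i = 0 -> `|A v i| <= 1 - c) -> c <= eps A u v.
Proof.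
move=> [i0 ui0] Auv; rewrite /eps lerBrDl -lerBrDr; apply: ge_sup.
  by exists `|A v i0|, i0 => //=; rewrite /supp /= ui0 eqxx.
by move=> _ [i /negP/negbNE/eqP ui <-]; apply: Auv.
Qed.

Lemma off_supp_le_eps u v i : sup_le1 A v -> u i = 0 ->
  `|A v i| <= 1 - eps A u v.
Proof.
move=> Av1 ui; rewrite /eps opprB addrC subrK; apply: sup_upper_bound.
  by split; [exists `|A v i|, i => //=; rewrite /supp /= ui eqxx | exists 1 => _ [j _ <-]].
by exists i => //=; rewrite /supp /= ui eqxx.
Qed.

Lemma eps_gt0 u v : A v @ \oo --> 0 -> sup_le1 A v ->
  (forall i, `|A v i| = 1 <-> u i != 0) -> 0 < eps A u v.
Proof.
move=> Av0 Av1 peak.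
have [N tail] := cvg0_tail_lt Av0 (ltac:(lra) : 0 < 1 / 2 :> R).
pose K := \big[Order.max/(1 / 2)]_(i <- iota 0 N | u i == 0) `|A v i|.
have off_lt1 i : u i == 0 -> `|A v i| < 1.
  move=> /eqP ui; rewrite lt_neqAle Av1 andbT; apply/eqP => /peak.
  by rewrite ui eqxx.
have K1 : K < 1 by apply: bigmax_lt => //; lra.
suff : 1 - K <= eps A u v by lra.
apply: le_eps => [|i ui]; last rewrite opprB addrC subrK.
  exists N; have [//|uN] := eqVneq (u N) 0.
  by have := tail N (leqnn N); rewrite (proj2 (peak N) uN); lra.
have [Ni|iN] := leqP N i.
  have K_ge : 1 / 2 <= K by apply: bigmax_ge_id.
  by have := tail i Ni; lra.
by rewrite /K (@le_bigmax_seq _ _ _ _ _ i _ (fun i => `|A v i|)) ?mem_iota ?ui.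
Qed.

End Eps.

Section FiniteDimensionalSubspace.
Variables (R : realType) (V : completeNormedModType R) (S : set V) (n : nat).
Hypothesis S_dim : subspace_dim S n.

Lemma subspace0 : S 0.
Proof.
case: S_dim => b [_ ->]; exists (fun => 0) => //.
by rewrite big1 // => i _; rewrite scale0r.
Qed.

Lemma subspaceDZ a x y : S x -> S y -> S (a *: x + y).
Proof.
case: S_dim => b [_ ->] [c _ <-] [d _ <-].
exists (fun i => a * c i + d i) => //.
rewrite scaler_sumr -big_split /=; apply: eq_bigr => i _.
by rewrite scalerDl scalerA.
Qed.

Lemma subspaceD x y : S x -> S y -> S (x + y).
Proof. by move=> Sx Sy; rewrite -[x]scale1r; apply: subspaceDZ. Qed.

Lemma subspaceZ a x : S x -> S (a *: x).
Proof. by move=> Sx; rewrite -[a *: x]addr0; apply: subspaceDZ => //; apply: subspace0. Qed.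

Lemma subspaceB x y : S x -> S y -> S (x - y).
Proof. by move=> Sx Sy; rewrite -scaleN1r addrC; apply: subspaceDZ. Qed.

Lemma subspace_sum (I : eqType) (r : seq I) (F : I -> V) :
  (forall j, j \in r -> S (F j)) -> S (\sum_(j <- r) F j).
Proof.
elim: r => [|j r IH] Sr; first by rewrite big_nil; apply: subspace0.
rewrite big_cons -[F j]scale1r; apply: subspaceDZ; first by apply: Sr; rewrite inE eqxx.
by apply: IH => k kr; apply: Sr; rewrite inE kr orbT.
Qed.

End FiniteDimensionalSubspace.

Section Discretization.
Variables (R : realType) (V : completeNormedModType R)
  (ip : V -> V -> R) (A : V -> nat -> R) (Astar : (nat -> R) -> V)
  (Hn : nat -> set V) (P : nat -> V -> V).
Hypotheses (ip_inner : inner_product ip) (A_c0 : bounded_linear_to_c0 A)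
  (Astar_adj : is_adjoint ip A Astar)
  (Astar_inj : forall u, l1 u -> Astar u = 0 -> u = (fun => 0))
  (Hn_dim : forall n, subspace_dim (Hn n) n)
  (P_proj : forall n, orth_proj ip (Hn n) (P n))
  (P_cvg : forall v, (fun n => P n v) @ \oo --> v).

Lemma ipBl x y z : ip (x - y) z = ip x z - ip y z.
Proof.
by case: ip_inner => _ ipDZ _; rewrite addrC -scaleN1r ipDZ mulN1r addrC.
Qed.

Lemma ip_self_eq0 x : ip x x = 0 -> x = 0.
Proof.
by case: ip_inner => _ _ ->; move/eqP; rewrite sqrf_eq0 => /eqP/normr0_eq0.
Qed.

Lemma orth_proj_ip_eq S p x y z : orth_proj ip S p -> p x = p y -> S z ->
  ip x z = ip y z.
Proof.
move=> pS pxy Sz; have [_ /(_ z Sz)] := pS x; have [_ /(_ z Sz)] := pS y.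
by rewrite !ipBl pxy => /subr0_eq -> /subr0_eq ->.
Qed.

Lemma A0 i : A 0 i = 0.
Proof.
case: A_c0 => ADZ _ _; have := ADZ 1 0 0 i; rewrite scale1r addr0 mul1r.
by move=> h; apply: (addrI (A 0 i)); rewrite addr0 -h.
Qed.

Lemma AD x y i : A (x + y) i = A x i + A y i.
Proof. by case: A_c0 => ADZ _ _; rewrite -[x]scale1r ADZ mul1r scale1r. Qed.

Lemma AZ a x i : A (a *: x) i = a * A x i.
Proof. by case: A_c0 => ADZ _ _; rewrite -[a *: x]addr0 ADZ A0 addr0. Qed.

Lemma AB x y i : A (x - y) i = A x i - A y i.
Proof. by rewrite AD -scaleN1r AZ mulN1r. Qed.

Lemma A_sum (I : Type) (r : seq I) (F : I -> V) i :
  A (\sum_(j <- r) F j) i = \sum_(j <- r) A (F j) i.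
Proof. by elim: r => [|j r IH]; rewrite ?big_nil ?A0 // !big_cons AD IH. Qed.

Lemma cvg_A_uniform (x : nat -> V) (y : V) e : x @ \oo --> y -> 0 < e ->
  \forall n \near \oo, forall i, `|A (x n) i - A y i| < e.
Proof.
case: A_c0 => _ [C AC] _ xy e0.
have C1 : 0 < `|C| + 1 by rewrite ltr_pwDr.
move/cvgrPdist_lt : xy => /(_ (e / (`|C| + 1))); rewrite divr_gt0 // => /(_ isT).
apply: filterS => n; rewrite distrC => xyn i; rewrite -AB; apply: le_lt_trans (AC _ _) _.
apply: le_lt_trans (_ : (`|C| + 1) * `|x n - y| < e); last by rewrite -ltr_pdivlMl // mulrC.
by rewrite ler_wpM2r // (le_trans (ler_norm C)) ?lerDl.
Qed.

Lemma cvg_A (x : nat -> V) (y : V) i : x @ \oo --> y ->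
  (fun n => A (x n) i) @ \oo --> A y i.
Proof.
move=> xy; apply/cvgrPdist_lt => e e0.
by apply: filterS (cvg_A_uniform xy e0) => n /(_ i); rewrite distrC.
Qed.

Lemma ip_Astar_finsupp u N : (forall i, (N <= i)%N -> u i = 0) ->
  forall z, ip (Astar u) z = \sum_(i < N) u i * A z i.
Proof.
move=> uN z; rewrite (Astar_adj (l1_finsupp uN)).
by apply: (proj2 (series_finsupp _)) => i /uN ->; rewrite mul0r.
Qed.

(* Otherwise [u := e_m - sum_j beta_j e_j] has [<A^* u, z> = 0] for all [z], so [A^* u = 0]
   although [u_m = 1]. *)
Lemma coord_not_combination m L (beta : nat -> R) : m \notin L ->
  ~ (forall z, A z m = \sum_(j <- L) beta j * A z j).
Proof.
move=> mL Am.
pose u i := (i == m)%:R - \sum_(j <- L) beta j * (i == j)%:R.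
have [N LN] := seq_nat_bounded (m :: L).
have mN : (m < N)%N by apply: LN; rewrite inE eqxx.
have uN i : (N <= i)%N -> u i = 0.
  move=> Ni; rewrite /u big1_seq => [|j /andP[_ jL]].
    by case: eqP Ni => [->|_]; rewrite ?subrr // leqNgt mN.
  by case: eqP Ni => [->|_]; rewrite ?mulr0 // leqNgt LN // inE jL orbT.
have Au0 : Astar u = 0.
  apply: ip_self_eq0; rewrite (ip_Astar_finsupp uN).
  under eq_bigr do rewrite mulrBl mulr_suml.
  rewrite sumrB sum_ord_delta // exchange_big /= Am; apply/eqP; rewrite subr_eq0; apply/eqP.
  rewrite !big_seq; apply: eq_bigr => j jL.
  under eq_bigr do rewrite -mulrA.
  by rewrite -mulr_sumr sum_ord_delta // LN // inE jL orbT.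
have := congr1 (fun g => g m) (Astar_inj (l1_finsupp uN) Au0).
rewrite /u eqxx big1_seq ?subr0 => [/eqP|j /andP[_ jL]]; first by rewrite oner_eq0.
by case: eqP jL => [<-|_]; rewrite ?(negbTE mL) ?mulr0.
Qed.

Lemma residual_coord_neq0 m L (b : nat -> V) : m \notin L ->
  exists y, A (y - \sum_(j <- L) A y j *: b j) m != 0.
Proof.
move=> mL; apply: contrapT => /forallNP Am0.
apply: (@coord_not_combination _ _ (fun j => A (b j) m) mL) => z.
move: (Am0 z) => /negP/negbNE; rewrite AB A_sum subr_eq0 => /eqP ->.
by apply: eq_bigr => j _; rewrite AZ mulrC.
Qed.

Definition biorthogonal (L : seq nat) (w : nat -> V) :=
  forall i j, i \in L -> j \in L -> A (w j) i = (i == j)%:R.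

Lemma biorth_residual_coord L w x i : uniq L -> biorthogonal L w -> i \in L ->
  A (x - \sum_(j <- L) A x j *: w j) i = 0.
Proof.
move=> uL Lw iL; rewrite AB A_sum big_seq.
under eq_bigr => j jL do rewrite AZ Lw // mulrC.
by rewrite -big_seq sum_seq_delta // subrr.
Qed.

Definition biorth_extend m (w : nat -> V) (z : V) (k : nat) : V :=
  if k == m then (A z m)^-1 *: z else w k - A (w k) m *: ((A z m)^-1 *: z).

Lemma biorthogonal_extend m L w z :
  m \notin L -> biorthogonal L w -> (forall i, i \in L -> A z i = 0) -> A z m != 0 ->
  biorthogonal (m :: L) (biorth_extend m w z).
Proof.
move=> mL Lw Lz zm i j; rewrite !inE /biorth_extend.
have Azn k : A ((A z m)^-1 *: z) k = (A z m)^-1 * A z k by rewrite AZ.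
have neq_m k : k \in L -> (k == m) = false.
  by move=> kL; apply/negbTE; apply: contraNneq mL => <-.
move=> /orP[/eqP ->|iL] /orP[/eqP ->|jL].
- by rewrite eqxx Azn mulVf.
- by rewrite neq_m // AB AZ Azn mulVf // mulr1 subrr eq_sym neq_m.
- by rewrite eqxx Azn (Lz i iL) mulr0 neq_m.
- by rewrite neq_m // AB AZ Azn (Lz i iL) !mulr0 subr0 Lw.
Qed.

Lemma subspace_biorth_extend S n m L w z : subspace_dim S n ->
  (forall j, j \in L -> S (w j)) -> S z ->
  forall j, j \in m :: L -> S (biorth_extend m w z j).
Proof.
move=> S_dim wS zS j; rewrite inE /biorth_extend; case: eqP => [_ _|_ /= jL].
  exact: (subspaceZ S_dim).
by apply: (subspaceB S_dim); [exact: wS | do 2 apply: (subspaceZ S_dim)].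
Qed.

Lemma cvg_biorth_extend m L (w : nat -> nat -> V) b (z : nat -> V) z' :
  (forall j, j \in L -> w^~ j @ \oo --> b j) -> z @ \oo --> z' -> A z' m != 0 ->
  forall j, j \in m :: L -> (fun n => biorth_extend m (w n) (z n) j) @ \oo -->
    biorth_extend m b z' j.
Proof.
move=> wb zz' z'm j; have zm := cvg_A (i := m) zz'.
rewrite inE /biorth_extend; case: eqP => [_ _|_ /= jL].
  by apply: cvgZ => //; apply: cvgV.
apply: cvgB; first exact: wb.
by apply: cvgZ; [exact: cvg_A (wb j jL) | apply: cvgZ => //; apply: cvgV].
Qed.

Lemma biorthogonal_system L : uniq L ->
  exists (w : nat -> nat -> V) (b : nat -> V),
   [/\ \forall n \near \oo, (forall j, j \in L -> Hn n (w n j)) /\ biorthogonal L (w n),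
       forall j, j \in L -> w^~ j @ \oo --> b j
     & biorthogonal L b].
Proof.
elim: L => [_|m L IH /= /andP[mL uL]].
  by exists (fun _ _ => 0), (fun _ => 0); split=> //; apply: nearW.
have [w [b [wHn wb Lb]]] := IH uL.
have [y y'm] := residual_coord_neq0 b mL.
pose y' := y - \sum_(j <- L) A y j *: b j.
pose z n := P n y - \sum_(j <- L) A (P n y) j *: w n j.
have zy' : z @ \oo --> y'.
  apply: cvgB; first exact: P_cvg.
  apply: cvg_sum_seq => j jL.
  by apply: cvgZ; [apply: cvg_A; exact: P_cvg | exact: wb].
exists (fun n => biorth_extend m (w n) (z n)), (biorth_extend m b y'); split.
- have zm0 : \forall n \near \oo, A (z n) m != 0 by exact: cvgr_neq0 (cvg_A (i := m) zy') y'm.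
  apply: filterS2 wHn zm0 => n [wH Lw] zm; split.
    apply: (subspace_biorth_extend (Hn_dim n)) => //.
    rewrite /z; apply: (subspaceB (Hn_dim n)); first by case: (P_proj n y).
    by apply: (subspace_sum (Hn_dim n)) => j jL; apply: (subspaceZ (Hn_dim n)); apply: wH.
  by apply: biorthogonal_extend => // i iL; apply: biorth_residual_coord.
- exact: cvg_biorth_extend.
- by apply: biorthogonal_extend => // i iL; apply: biorth_residual_coord.
Qed.

Lemma interpolating_approximation L v : uniq L ->
  exists vn : nat -> V,
    (\forall n \near \oo, Hn n (vn n) /\ forall i, i \in L -> A (vn n) i = A v i)
    /\ vn @ \oo --> v.
Proof.
move=> uL; have [w [b [wHn wb _]]] := biorthogonal_system uL.
exists (fun n => P n v + \sum_(j <- L) A (v - P n v) j *: w n j); split.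
  apply: filterS wHn => n [wH Lw]; split.
    apply: (subspaceD (Hn_dim n)); first by case: (P_proj n v).
    by apply: (subspace_sum (Hn_dim n)) => j jL; apply: (subspaceZ (Hn_dim n)); apply: wH.
  move=> i iL; apply/eqP; rewrite eq_sym -subr_eq0 -AB opprD addrA.
  by rewrite biorth_residual_coord.
have Pv0 : (fun n => v - P n v) @ \oo --> 0.
  by rewrite -(subrr v); apply: cvgB; [exact: cvg_cst | exact: P_cvg].
have sum0 : (fun n => \sum_(j <- L) A (v - P n v) j *: w n j) @ \oo -->
    \sum_(j <- L) (0 : R) *: b j.
  apply: cvg_sum_seq => j jL; apply: cvgZ (wb j jL).
  by rewrite -(A0 j); apply: cvg_A.
rewrite big1 // in sum0 => [|j _]; last by rewrite scale0r.
by rewrite -[X in _ --> X]addr0; apply: cvgD; [exact: P_cvg | exact: sum0].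
Qed.

Lemma ip_Astar_biorth L w x k : biorthogonal L w -> k \in L ->
  (forall i, i \notin L -> x i = 0) -> ip (Astar x) (w k) = x k.
Proof.
move=> Lw kL xL; have [N LN] := seq_nat_bounded L.
have xN i : (N <= i)%N -> x i = 0.
  by move=> Ni; apply: xL; apply: contraL Ni => /LN; rewrite -ltnNge.
rewrite (ip_Astar_finsupp xN) -(sum_ord_delta (fun=> x k) (LN k kL)).
apply: eq_bigr => i _; have [iL|iL] := boolP ((i : nat) \in L).
  by rewrite Lw //; case: eqP => [->|_]; rewrite ?mulr1 ?mulr0 ?mul0r ?mul1r.
rewrite xL // mul0r; case: eqP => [ik|_]; last by rewrite mul0r.
by move: iL; rewrite ik kL.
Qed.

Lemma eventually_Hn_separates L : uniq L ->
  \forall n \near \oo, forall x y : nat -> R,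
    (forall i, i \notin L -> x i = 0) -> (forall i, i \notin L -> y i = 0) ->
    (forall z, Hn n z -> ip (Astar x) z = ip (Astar y) z) -> x = y.
Proof.
move=> uL; have [w [_ [wHn _ _]]] := biorthogonal_system uL.
apply: filterS wHn => n [wH Lw] x y xL yL xy; apply: funext => k.
have [kL|kL] := boolP (k \in L); last by rewrite xL ?yL.
by rewrite -(ip_Astar_biorth Lw kL xL) -(ip_Astar_biorth Lw kL yL) xy //; apply: wH.
Qed.

Lemma dual_certificate n u0 u v : Hn n v -> (forall i, `|A v i| <= 1) ->
  (forall i, u0 i != 0 -> A v i = Num.sg (u0 i)) ->
  l1 u0 -> l1 u -> P n (Astar u) = P n (Astar u0) ->
  l1norm u0 <= l1norm u /\
  (l1norm u <= l1norm u0 -> forall i, `|A v i| < 1 -> u i = 0).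
Proof.
move=> vH v1 v_sg l1u0 l1u Pu.
have [_ le_u] := series_mul_le_l1norm l1u v1.
have lim_u : limn (series (fun i => u i * A v i)) = l1norm u0.
  rewrite -(Astar_adj l1u) (orth_proj_ip_eq (P_proj n) Pu vH) Astar_adj //.
  exact: series_mul_sg.
split=> [|le_u0]; first by rewrite -lim_u.
by apply: (eq0_off_peak l1u v1); rewrite lim_u.
Qed.

End Discretization.

Theorem lemma3 (R : realType) (V : completeNormedModType R)
  (ip : V -> V -> R) (A : V -> nat -> R) (Astar : (nat -> R) -> V)
  (Hn : nat -> set V) (P : nat -> V -> V)
  (f : V) (udag : nat -> R) (vdag : V) :
  inner_product ip ->
  bounded_linear_to_c0 A ->
  is_adjoint ip A Astar ->
  (forall v, (forall i, A v i = 0) -> v = 0) ->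
  (forall u, l1 u -> Astar u = 0 -> u = (fun => 0)) ->
  (forall n, subspace_dim (Hn n) n) ->
  (forall n, orth_proj ip (Hn n) (P n)) ->
  (forall v, (fun n => P n v) @ \oo --> v) ->
  l1 udag -> Astar udag = f ->
  sup_le1 A vdag ->
  (forall i, udag i != 0 -> A vdag i = Num.sg (udag i)) ->
  (forall i, `|A vdag i| = 1 <-> udag i != 0) ->
  exists n0 : nat, forall n, (n0 <= n)%N ->
    (forall u, l1 u -> P n (Astar u) = P n f ->
       l1norm udag <= l1norm u /\ (l1norm u <= l1norm udag -> u = udag)) /\
    (exists vn : V, Hn n vn /\ sup_le1 A vn /\
       (forall i, `|A vn i| = 1 <-> udag i != 0) /\
       eps A udag vn >= eps A udag vdag / 2).
Proof.
move=> ip_inner A_c0 Astar_adj _ Astar_inj Hn_dim P_proj P_cvg l1_ud Aud Av1 Av_sg Av_peak.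
have Av0 : A vdag @ \oo --> 0 by case: A_c0.
have [L [uL memL]] := peak_set_finite Av0 Av_peak.
have [i0 ud_i0] : exists i, udag i = 0.
  have [N LN] := seq_nat_bounded L; exists N; apply/eqP.
  by rewrite -[_ == _]negbK -memL; apply/negP => /LN; rewrite ltnn.
have e0 := eps_gt0 Av0 Av1 Av_peak; set e := eps A udag vdag in e0 *.
have [vn [vn_near vn_cvg]] := interpolating_approximation ip_inner A_c0 Astar_adj
  Astar_inj Hn_dim P_proj P_cvg vdag uL.
have vn_close := cvg_A_uniform A_c0 vn_cvg (divr_gt0 e0 (ltr0Sn _ 1) : 0 < e / 2).
have separates := eventually_Hn_separates ip_inner A_c0 Astar_adj
  Astar_inj Hn_dim P_proj P_cvg uL.
have [n0 _ n0P] := filterI vn_near (filterI vn_close separates).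
exists n0 => n /n0P [[vnH vnL] [close sep]].
have vn_supp i : udag i != 0 -> A (vn n) i = A vdag i by rewrite -memL; apply: vnL.
have [off_vn peak_vn vn1] :=
  peak_perturbation e0 Av_peak (fun i => off_supp_le_eps Av1) vn_supp close.
split; last by exists (vn n); do !split => //; apply: le_eps; [exists i0 | rewrite -/e].
move=> u l1u; rewrite -Aud => Pu.
have vn_sg i : udag i != 0 -> A (vn n) i = Num.sg (udag i) by move=> ui; rewrite vn_supp ?Av_sg.
have [le_u off_u] := dual_certificate ip_inner Astar_adj P_proj vnH vn1 vn_sg l1_ud l1u Pu.
split=> // le_ud; apply: sep => [i|i|z].
- rewrite memL negbK => /eqP ui; apply: off_u => //.
  by have := off_vn i ui; lra.
- by rewrite memL negbK => /eqP.
- exact: (orth_proj_ip_eq ip_inner (P_proj n) Pu).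
Qed.
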